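(* Let $G_f$ and $G_g$ be ROBDDs over the same variable ordering, representing boolean functions $f$ and $g$, whose node identifiers are compact and whose nodes respect the extended ordering described in the context. Then $f\equiv g$ if and only if for every level $i$ and every $j$, the $j$-th node on level $i$ of $G_f$ and the $j$-th node on level $i$ of $G_g$ are numerically identical (i.e. equal as triples $(\mathit{uid},\mathit{low},\mathit{high})$).
   Context: An OBDD over variables $x_0,x_1,\dots$ is a rooted DAG with leaves $\bot,\top$ and internal nodes labelled by a variable index $i$ with low child (for $x_i=\bot$) and high child (for $x_i=\top$), labels strictly increasing along every path; the internal nodes with label $i$ form level $i$. Each internal node $v$ has a unique identifier $x_{i,\mathit{id}}=(i,\mathit{id})$ with $\mathit{id}\in\mathbb N$ unique within level $i$, and is represented as the triple $(x_{i,\mathit{id}},\mathit{low},\mathit{high})$ where $\mathit{low},\mathit{high}$ are identifiers of internal nodes or leaf values. An ROBDD is an OBDD with no node having two identical children and no two distinct nodes with the same label and the same children. Extended ordering: on identifiers and leaves, $(i_1,\mathit{id}_1)<(i_2,\mathit{id}_2)$ iff $i_1<i_2$ or ($i_1=i_2$ and $\mathit{id}_1<\mathit{id}_2$), and every internal identifier is smaller than $\bot$, with $\bot<\top$; moreover, for any two internal nodes $(x_{i,\mathit{id}_1},\mathit{low}_1,\mathit{high}_1)$ and $(x_{i,\mathit{id}_2},\mathit{low}_2,\mathit{high}_2)$ on the same level $i$, $\mathit{id}_1<\mathit{id}_2$ iff $\mathit{low}_1<\mathit{low}_2$ or ($\mathit{low}_1=\mathit{low}_2$ and $\mathit{high}_1<\mathit{high}_2$),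 children compared by this same ordering. Identifiers are compact if, for every level $i$ with $N_i$ nodes, the identifiers on level $i$ are exactly $0,1,\dots,N_i-1$ (so the $j$-th node on level $i$ in this order has identifier $j-1$). *)

From mathcomp Require Import all_boot.
Set Implicit Arguments. Unset Strict Implicit. Unset Printing Implicit Defensive.

(* Identifier x_{i,id} = (i, id). *)
Definition uid := (nat * nat)%type.
(* A pointer is either an internal node identifier (inl) or a leaf value (inr):
   inr false = bot, inr true = top. *)
Definition ptr := (uid + bool)%type.
Definition node := (uid * ptr * ptr)%type.

Definition nuid (n : node) : uid := n.1.1.
Definition nlabel (n : node) : nat := (nuid n).1.
Definition nid (n : node) : nat := (nuid n).2.
Definition nlow (n : node) : ptr := n.1.2.
Definition nhigh (n : node) : ptr := n.2.

Record bdd := BDD { bnodes : seq node; broot : ptr }.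

Definition has_node (G : bdd) (u : uid) : bool := u \in map nuid (bnodes G).

Inductive evals (G : bdd) (x : nat -> bool) : ptr -> bool -> Prop :=
| evals_leaf b : evals G x (inr b) b
| evals_node n b : n \in bnodes G ->
    evals G x (if x (nlabel n) then nhigh n else nlow n) b ->
    evals G x (inl (nuid n)) b.

Definition represents (G : bdd) (f : (nat -> bool) -> bool) : Prop :=
  forall x, evals G x (broot G) (f x).

Inductive reach (G : bdd) : ptr -> ptr -> Prop :=
| reach_refl p : reach G p p
| reach_step n q : n \in bnodes G ->
    (reach G (nlow n) q \/ reach G (nhigh n) q) ->
    reach G (inl (nuid n)) q.

Definition child_ok (n : node) (c : ptr) : bool :=
  match c with inl u => nlabel n < u.1 | inr _ => true end.

Definition is_obdd (G : bdd) : Prop :=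
  [/\ uniq (map nuid (bnodes G)),
      (forall n, n \in bnodes G ->
         forall u, (nlow n = inl u \/ nhigh n = inl u) -> has_node G u),
      (forall n, n \in bnodes G -> child_ok n (nlow n) && child_ok n (nhigh n)),
      (forall u, broot G = inl u -> has_node G u) &
      (forall n, n \in bnodes G -> reach G (broot G) (inl (nuid n)))].

Definition is_robdd (G : bdd) : Prop :=
  [/\ is_obdd G,
      (forall n, n \in bnodes G -> nlow n != nhigh n) &
      (forall n1 n2, n1 \in bnodes G -> n2 \in bnodes G ->
         nlabel n1 = nlabel n2 -> nlow n1 = nlow n2 -> nhigh n1 = nhigh n2 ->
         n1 = n2)].

Definition ptr_lt (p q : ptr) : bool :=
  match p, q with
  | inl (i1, d1), inl (i2, d2) => (i1 < i2) || ((i1 == i2) && (d1 < d2))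
  | inl _, inr _ => true
  | inr _, inl _ => false
  | inr b1, inr b2 => ~~ b1 && b2
  end.

Definition children_lt (n1 n2 : node) : bool :=
  ptr_lt (nlow n1) (nlow n2) ||
  ((nlow n1 == nlow n2) && ptr_lt (nhigh n1) (nhigh n2)).

Definition respects_order (G : bdd) : Prop :=
  forall n1 n2, n1 \in bnodes G -> n2 \in bnodes G ->
    nlabel n1 = nlabel n2 -> (nid n1 < nid n2) = children_lt n1 n2.

Definition level_nodes (G : bdd) (i : nat) : seq node :=
  sort (fun a b => nid a <= nid b) [seq n <- bnodes G | nlabel n == i].

Definition compact (G : bdd) : Prop :=
  forall i, perm_eq [seq nid n | n <- level_nodes G i]
                    (iota 0 (size (level_nodes G i))).

Definition jth_node (G : bdd) (i j : nat) : option node :=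
  nth None (map Some (level_nodes G i)) j.

(* Two valid pointers denoting the same function are shown equal by downward
   induction on their level.  If one of them is a node of level l and the other
   lies strictly below l (or is a leaf), the node does not depend on its own
   variable, i.e. its two children are equivalent; by the induction hypothesis
   they are then equal, which a reduced diagram forbids.  So equivalent nodes
   have the same label and, inductively, the same children.  Inside one ROBDD
   this forces equal nodes.  Across two ROBDDs of the same function, every node
   of one has an equivalent node in the other (follow a path from the root), so
   each level carries the same set of (low, high) pairs in both diagrams; by
   compactness and the extended ordering, the identifier of a node is the number
   of pairs on its level smaller than its own, hence identifiers agree as well.
   The two diagrams thus have the same nodes, and the same sorted levels. *)

From mathcomp Require Import all_boot.
From Stdlib Require Import Setoid.
Set Implicit Arguments. Unset Strict Implicit. Unset Printing Implicit Defensive.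

Lemma uniq_map_inj (T U : eqType) (f : T -> U) (s : seq T) :
  uniq (map f s) -> {in s &, injective f}.
Proof.
elim: s => //= y s IH /andP[fy_notin /IH inj_s] a b.
rewrite !inE => /predU1P[->|a_s] /predU1P[->|b_s] // fab.
- by case/negP: fy_notin; rewrite fab map_f.
- by case/negP: fy_notin; rewrite -fab map_f.
- exact: inj_s.
Qed.

Lemma count_iota_lt a N : a <= N -> count (fun v => v < a) (iota 0 N) = a.
Proof.
move=> le_aN; rewrite -(subnKC le_aN) iotaD count_cat add0n.
rewrite (@eq_in_count _ _ predT) ?count_predT ?size_iota; last first.
  by move=> v; rewrite mem_iota.
rewrite (@eq_in_count _ _ pred0) ?count_pred0 ?addn0 // => v.
by rewrite mem_iota => /andP[le_av _]; rewrite ltnNge le_av.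
Qed.

Lemma downward_ind (P : nat -> Prop) N : P N -> (forall k, P k.+1 -> P k) -> P 0.
Proof.
move=> PN Pstep; suff P_sub d : P (N - d) by rewrite -(subnn N).
elim: d => [|d IH]; first by rewrite subn0.
case: (ltnP d N) => [lt_dN|le_Nd]; first by apply: Pstep; rewrite subnSK.
have /eqP-> : N - d.+1 == 0 by rewrite subn_eq0 leqW.
by move: IH; have /eqP-> : N - d == 0 by rewrite subn_eq0.
Qed.

Definition branch (n : node) (b : bool) : ptr := if b then nhigh n else nlow n.

Definition children (n : node) : ptr * ptr := (nlow n, nhigh n).

Definition ptr_valid (G : bdd) (p : ptr) : bool :=
  if p is inl u then has_node G u else true.

Definition ptr_ge (k : nat) (p : ptr) : bool :=
  if p is inl u then k <= u.1 else true.

Lemma nuidE n : nuid n = (nlabel n, nid n).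
Proof. exact: surjective_pairing. Qed.

Lemma node_eq n m : nuid n = nuid m -> children n = children m -> n = m.
Proof.
case: n m => [[u l] h] [[u' l'] h'].
by rewrite /nuid /children /nlow /nhigh /= => -> [-> ->].
Qed.

Lemma ptr_validP G u : reflect (exists2 n, n \in bnodes G & u = nuid n)
                               (ptr_valid G (inl u)).
Proof. exact: mapP. Qed.

Lemma ptr_valid_node G n : n \in bnodes G -> ptr_valid G (inl (nuid n)).
Proof. exact: map_f. Qed.

Lemma ptr_ge0 p : ptr_ge 0 p.
Proof. by case: p. Qed.

Lemma ptr_ge_le k k' p : k <= k' -> ptr_ge k' p -> ptr_ge k p.
Proof. by case: p => //= u; apply: leq_trans. Qed.

Section Evaluation.

Variable G : bdd.

Lemma evals_inrE x b c : evals G x (inr b) c -> c = b.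
Proof. by move=> ev; inversion ev. Qed.

Hypothesis uniq_uid : uniq (map nuid (bnodes G)).

Lemma evals_inlE x n c : n \in bnodes G ->
  evals G x (inl (nuid n)) c <-> evals G x (branch n (x (nlabel n))) c.
Proof.
move=> Gn; split=> [ev|]; last exact: evals_node.
inversion ev as [|n' c' Gn' ev' [e_uid]].
by rewrite -(uniq_map_inj uniq_uid Gn' Gn e_uid).
Qed.

Lemma evals_functional x p c1 c2 : evals G x p c1 -> evals G x p c2 -> c1 = c2.
Proof.
move=> ev; elim: ev c2 => [b|n b Gn _ IH] c2; first by move/evals_inrE.
by move/(evals_inlE _ _ Gn)/IH.
Qed.

End Evaluation.

Lemma evals_subgraph G1 G2 x p c : {subset bnodes G1 <= bnodes G2} ->
  evals G1 x p c -> evals G2 x p c.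
Proof.
move=> sub ev; elim: ev => [b|n b G1n _ IH]; first exact: evals_leaf.
by apply: evals_node IH; apply: sub.
Qed.

Section OBDD.

Variable G : bdd.
Hypothesis obddG : is_obdd G.

Lemma branch_valid n b : n \in bnodes G -> ptr_valid G (branch n b).
Proof.
move=> Gn; case: obddG => _ children_exist _ _ _.
case E: (branch n b) => [u|] //=; apply: (children_exist n Gn).
by case: b E; [right | left].
Qed.

Lemma branch_ge n b : n \in bnodes G -> ptr_ge (nlabel n).+1 (branch n b).
Proof.
case: obddG => _ _ ordered _ _ /ordered/andP[].
by case: b; rewrite /branch; [case: (nhigh n) | case: (nlow n)].
Qed.

Lemma obdd_root_valid : ptr_valid G (broot G).
Proof.
by case: obddG => _ _ _ root_exists _; case E: (broot G) => [u|] //; apply: root_exists.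
Qed.

Lemma evals_agree k x y p c : ptr_ge k p -> (forall j, k <= j -> x j = y j) ->
  evals G x p c -> evals G y p c.
Proof.
move=> + + ev; elim: ev k => [b|n b Gn _ IH] k kp xy; first exact: evals_leaf.
apply: evals_node => //; rewrite -xy //.
apply: (IH (nlabel n).+1); first exact: branch_ge.
by move=> j lt_nj; apply/xy/(leq_trans kp)/ltnW.
Qed.

Lemma evals_agreeE k x y p c : ptr_ge k p -> (forall j, k <= j -> x j = y j) ->
  evals G x p c <-> evals G y p c.
Proof.
by move=> kp xy; split; apply: evals_agree kp _ => // j /xy.
Qed.

Lemma evals_at_label x n b c : n \in bnodes G ->
  evals G x (branch n b) c <->
  evals G [eta x with nlabel n |-> b] (inl (nuid n)) c.
Proof.
case: (obddG) => uniq_uid _ _ _ _ Gn.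
rewrite evals_inlE //= eqxx; apply: evals_agreeE (branch_ge b Gn) _ => j lt_nj.
by rewrite /=; case: eqP => // e; rewrite e ltnn in lt_nj.
Qed.

End OBDD.

Definition sem_eq (G1 G2 : bdd) (p q : ptr) : Prop :=
  forall x c, evals G1 x p c <-> evals G2 x q c.

Definition nonredundant_from (G : bdd) (k : nat) : Prop :=
  forall n, n \in bnodes G -> k <= nlabel n -> ~ sem_eq G G (nlow n) (nhigh n).

Lemma sem_eq_sym G1 G2 p q : sem_eq G1 G2 p q -> sem_eq G2 G1 q p.
Proof. by move=> pq x c; rewrite pq. Qed.

Lemma represents_sem_eq G1 G2 f g : is_obdd G1 -> is_obdd G2 ->
  represents G1 f -> represents G2 g -> f =1 g ->
  sem_eq G1 G2 (broot G1) (broot G2).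
Proof.
case=> [U1 _ _ _ _] [U2 _ _ _ _] Rf Rg fg x c; split=> ev.
- by rewrite (evals_functional U1 ev (Rf x)) fg.
- by rewrite (evals_functional U2 ev (Rg x)) -fg.
Qed.

Lemma sem_eq_inr G1 G2 b b' : sem_eq G1 G2 (inr b) (inr b') -> b = b'.
Proof.
by move=> bb'; have /bb'/evals_inrE := evals_leaf G1 (fun=> false) b.
Qed.

Lemma sem_eq_branch G1 G2 n m b : is_obdd G1 -> is_obdd G2 ->
  n \in bnodes G1 -> m \in bnodes G2 -> nlabel n = nlabel m ->
  sem_eq G1 G2 (inl (nuid n)) (inl (nuid m)) ->
  sem_eq G1 G2 (branch n b) (branch m b).
Proof.
move=> O1 O2 G1n G2m lnm nm x c.
by rewrite (evals_at_label O1 x b c G1n) (evals_at_label O2 x b c G2m) lnm nm.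
Qed.

(* The pointer [q] does not read the variable of [n], so setting that variable
   to false or to true cannot change the value of [n]. *)
Lemma sem_eq_redundant G1 G2 n q : is_obdd G1 -> is_obdd G2 -> n \in bnodes G1 ->
  ptr_ge (nlabel n).+1 q -> sem_eq G1 G2 (inl (nuid n)) q ->
  sem_eq G1 G1 (nlow n) (nhigh n).
Proof.
move=> O1 O2 G1n nq nq_eq x c.
rewrite (evals_at_label O1 x false c G1n) (evals_at_label O1 x true c G1n) !nq_eq.
apply: (evals_agreeE O2 c nq) => j lt_nj /=.
by case: eqP => // e; rewrite e ltnn in lt_nj.
Qed.

Section Shape.

Variables (G1 G2 : bdd) (k : nat).
Hypotheses (O1 : is_obdd G1) (O2 : is_obdd G2).

Lemma sem_eq_inr_shape b q : nonredundant_from G2 k ->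
  ptr_valid G2 q -> ptr_ge k q -> sem_eq G1 G2 (inr b) q -> q = inr b.
Proof.
move=> NR2; case: q => [u /ptr_validP[m G2m ->] km|b' _ _ bb']; last first.
  by rewrite (sem_eq_inr bb').
move=> bm; case: (NR2 m G2m km).
exact: sem_eq_redundant O2 O1 G2m _ (sem_eq_sym bm).
Qed.

Lemma sem_eq_inl_shape n q : nonredundant_from G1 k -> nonredundant_from G2 k ->
  n \in bnodes G1 -> k <= nlabel n -> ptr_valid G2 q -> ptr_ge k q ->
  sem_eq G1 G2 (inl (nuid n)) q ->
  exists2 m, m \in bnodes G2 & q = inl (nuid m) /\ nlabel n = nlabel m.
Proof.
move=> NR1 NR2 G1n kn; case: q => [u /ptr_validP[m G2m ->] km nm|b _ _ nb]; last first.
  by case: (NR1 n G1n kn); apply: sem_eq_redundant nb.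
exists m => //; split=> //.
case: (ltngtP (nlabel n) (nlabel m)) => // [lt_nm|lt_mn].
- by case: (NR1 n G1n kn); apply: sem_eq_redundant nm.
- by case: (NR2 m G2m km); apply: sem_eq_redundant O2 O1 G2m _ (sem_eq_sym nm).
Qed.

End Shape.

Definition sem_injective_from (G1 G2 : bdd) (k : nat) : Prop :=
  forall p q, ptr_valid G1 p -> ptr_valid G2 q -> ptr_ge k p -> ptr_ge k q ->
    sem_eq G1 G2 p q -> p = q.

Definition depth (G : bdd) : nat := \max_(n <- bnodes G) (nlabel n).+1.

Lemma nlabel_lt_depth G n : n \in bnodes G -> nlabel n < depth G.
Proof. by move=> Gn; apply: (leq_bigmax_seq n). Qed.

Lemma ptr_ge_depth G N u : depth G <= N -> ptr_valid G (inl u) -> ~~ ptr_ge N (inl u).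
Proof.
move=> dN /ptr_validP[n Gn ->]; rewrite /= -ltnNge.
exact: leq_trans (nlabel_lt_depth Gn) dN.
Qed.

Lemma sem_injective_from_sym G1 G2 k :
  sem_injective_from G1 G2 k -> sem_injective_from G2 G1 k.
Proof. by move=> inj p q vp vq kp kq /sem_eq_sym/inj-> //. Qed.

Lemma sem_injective_from_le G1 G2 k k' : k <= k' ->
  sem_injective_from G1 G2 k -> sem_injective_from G1 G2 k'.
Proof.
by move=> le_kk' inj p q vp vq kp kq; apply: inj => //; apply: ptr_ge_le le_kk' _.
Qed.

Lemma sem_injective_from_depth G1 G2 :
  sem_injective_from G1 G2 (maxn (depth G1) (depth G2)).
Proof.
move=> [u|b] [v|b'] vp vq kp kq //.
- by rewrite (negbTE (ptr_ge_depth (leq_maxl _ _) vp)) in kp.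
- by rewrite (negbTE (ptr_ge_depth (leq_maxl _ _) vp)) in kp.
- by rewrite (negbTE (ptr_ge_depth (leq_maxr _ _) vq)) in kq.
- by move/sem_eq_inr->.
Qed.

Lemma sem_eq_children G1 G2 k n m : is_obdd G1 -> is_obdd G2 ->
  sem_injective_from G1 G2 k.+1 -> n \in bnodes G1 -> m \in bnodes G2 ->
  k <= nlabel n -> nlabel n = nlabel m ->
  sem_eq G1 G2 (inl (nuid n)) (inl (nuid m)) -> children n = children m.
Proof.
move=> O1 O2 inj G1n G2m kn lnm nm.
have branch_eq b : branch n b = branch m b.
  apply: inj; rewrite ?branch_valid //; last exact: sem_eq_branch.
  - by apply: ptr_ge_le (branch_ge O1 b G1n).
  - by apply: ptr_ge_le (branch_ge O2 b G2m); rewrite -lnm.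
by rewrite /children; move: (branch_eq false) (branch_eq true) => /= -> ->.
Qed.

Lemma sem_injective_from_step G1 G2 k : is_obdd G1 -> is_obdd G2 ->
  nonredundant_from G1 k -> nonredundant_from G2 k ->
  (forall n m, n \in bnodes G1 -> m \in bnodes G2 -> k <= nlabel n ->
     nlabel n = nlabel m -> children n = children m -> nid n = nid m) ->
  sem_injective_from G1 G2 k.+1 -> sem_injective_from G1 G2 k.
Proof.
move=> O1 O2 NR1 NR2 same_id IH [u|b] q vp vq kp kq pq; last first.
  by rewrite (sem_eq_inr_shape O1 O2 NR2 vq kq pq).
case/ptr_validP: vp => n G1n eu; subst u.
have [m G2m [eq_q lnm]] := sem_eq_inl_shape O1 O2 NR1 NR2 G1n kp vq kq pq; subst q.
have same_children := sem_eq_children O1 O2 IH G1n G2m kp lnm pq.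
by rewrite !nuidE lnm (same_id n m).
Qed.

Lemma robdd_sem_injective_self G : is_robdd G -> sem_injective_from G G 0.
Proof.
case=> O nonredundant unique_nodes.
apply: (downward_ind (@sem_injective_from_depth G G)) => k IH.
have NR : nonredundant_from G k.
  move=> n Gn kn low_high; case/eqP: (nonredundant n Gn).
  apply: (IH (branch n false) (branch n true)); rewrite ?branch_valid //.
  - by apply: ptr_ge_le (branch_ge O false Gn).
  - by apply: ptr_ge_le (branch_ge O true Gn).
apply: sem_injective_from_step IH => // n m Gn Gm _ lnm [lo hi].
by rewrite (unique_nodes n m).
Qed.

Lemma robdd_nonredundant G k : is_robdd G -> nonredundant_from G k.
Proof.
move=> R n Gn _ low_high; have [O nonredundant _] := R.
case/eqP: (nonredundant n Gn); apply: (robdd_sem_injective_self R) low_high.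
- exact: (branch_valid O false Gn).
- exact: (branch_valid O true Gn).
- exact: ptr_ge0.
- exact: ptr_ge0.
Qed.

Lemma reach_closed G (P : ptr -> Prop) :
  (forall n b, n \in bnodes G -> P (inl (nuid n)) -> P (branch n b)) ->
  forall p r, reach G p r -> P p -> P r.
Proof.
move=> P_branch; fix IH 3 => p r [{}p|n q Gn [low_r|high_r]] Pp //.
- exact: IH _ _ low_r (P_branch n false Gn Pp).
- exact: IH _ _ high_r (P_branch n true Gn Pp).
Qed.

Lemma node_counterpart G1 G2 n : is_robdd G1 -> is_robdd G2 ->
  sem_eq G1 G2 (broot G1) (broot G2) -> n \in bnodes G1 ->
  exists2 m, m \in bnodes G2 &
    nlabel n = nlabel m /\ sem_eq G1 G2 (inl (nuid n)) (inl (nuid m)).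
Proof.
move=> R1 R2 roots G1n; have [O1 _ _] := R1; have [O2 _ _] := R2.
have NR1 : nonredundant_from G1 0 := robdd_nonredundant R1.
have NR2 : nonredundant_from G2 0 := robdd_nonredundant R2.
have shape n' q : n' \in bnodes G1 -> ptr_valid G2 q ->
    sem_eq G1 G2 (inl (nuid n')) q ->
    exists2 m, m \in bnodes G2 & q = inl (nuid m) /\ nlabel n' = nlabel m.
  by move=> G1n' vq; exact: (sem_eq_inl_shape O1 O2 NR1 NR2 G1n' (leq0n _) vq (ptr_ge0 q)).
pose P r := exists2 q, ptr_valid G2 q & sem_eq G1 G2 r q.
have P_branch n' b : n' \in bnodes G1 -> P (inl (nuid n')) -> P (branch n' b).
  move=> G1n' [q vq nq]; have [m G2m [eq_q lnm]] := shape n' q G1n' vq nq; subst q.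
  by exists (branch m b); [exact: branch_valid | exact: sem_eq_branch].
have [q vq nq] : P (inl (nuid n)).
  case: O1 => _ _ _ _ /(_ n G1n) reach_n.
  by apply: reach_closed P_branch _ _ reach_n _; exists (broot G2); rewrite ?obdd_root_valid.
have [m G2m [eq_q lnm]] := shape n q G1n vq nq; subst q.
by exists m.
Qed.

Definition level (G : bdd) (l : nat) : seq node := [seq n <- bnodes G | nlabel n == l].

Definition pair_lt (c d : ptr * ptr) : bool :=
  ptr_lt c.1 d.1 || (c.1 == d.1) && ptr_lt c.2 d.2.

Lemma mem_level G l n : (n \in level G l) = (nlabel n == l) && (n \in bnodes G).
Proof. exact: mem_filter. Qed.

Lemma mem_level_nodes G i n : (n \in level_nodes G i) = (n \in level G i).
Proof. exact: mem_sort. Qed.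

(* Compactness and the extended ordering make an identifier the rank of the
   node's children among those of its level. *)
Lemma nid_count G n : compact G -> respects_order G -> n \in bnodes G ->
  nid n = count (pair_lt^~ (children n)) (map children (level G (nlabel n))).
Proof.
move=> C RO Gn; set L := level G (nlabel n).
have ids : perm_eq (map nid L) (iota 0 (size L)).
  have := C (nlabel n); rewrite /level_nodes size_sort; apply: perm_trans.
  by apply: perm_map; rewrite perm_sym perm_sort.
have lt_n_size : nid n < size L.
  have : nid n \in map nid L by rewrite map_f // mem_level eqxx.
  by rewrite (perm_mem ids) mem_iota.
rewrite count_map -(@eq_in_count _ (fun n' => nid n' < nid n)); last first.
  by move=> n'; rewrite mem_level => /andP[/eqP ln' G1n']; apply: RO.
by rewrite -(count_map nid (fun v => v < nid n)) (permP ids) count_iota_lt // ltnW.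
Qed.

Lemma uniq_level_children G l : is_robdd G -> uniq (map children (level G l)).
Proof.
case=> -[uniq_uid _ _ _ _] _ unique_nodes.
rewrite map_inj_in_uniq ?filter_uniq ?(map_uniq uniq_uid) // => n m.
rewrite !mem_level => /andP[/eqP ln Gn] /andP[/eqP lm Gm] [lo hi].
by apply: unique_nodes; rewrite ?ln ?lm.
Qed.

Lemma level_children_subset G1 G2 k l : is_robdd G1 -> is_robdd G2 ->
  sem_eq G1 G2 (broot G1) (broot G2) -> sem_injective_from G1 G2 k.+1 -> k <= l ->
  {subset map children (level G1 l) <= map children (level G2 l)}.
Proof.
move=> R1 R2 roots inj kl c /mapP[n + ->]; rewrite mem_level => /andP[/eqP ln G1n].
have [[O1 _ _] [O2 _ _]] := (R1, R2).
have [m G2m [lnm nm]] := node_counterpart R1 R2 roots G1n.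
rewrite (sem_eq_children O1 O2 inj G1n G2m _ lnm nm) ?ln // map_f //.
by rewrite mem_level -lnm ln eqxx.
Qed.

Lemma robdd_sem_injective G1 G2 : is_robdd G1 -> is_robdd G2 ->
  compact G1 -> compact G2 -> respects_order G1 -> respects_order G2 ->
  sem_eq G1 G2 (broot G1) (broot G2) -> sem_injective_from G1 G2 0.
Proof.
move=> R1 R2 C1 C2 RO1 RO2 roots; have [[O1 _ _] [O2 _ _]] := (R1, R2).
apply: (downward_ind (@sem_injective_from_depth G1 G2)) => k IH.
apply: sem_injective_from_step (robdd_nonredundant R1) (robdd_nonredundant R2) _ (IH) => //.
move=> n m G1n G2m kn lnm same_children.
have same_level : perm_eq (map children (level G1 (nlabel n)))
                          (map children (level G2 (nlabel m))).
  rewrite -lnm uniq_perm ?uniq_level_children // => c; apply/idP/idP.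
  - exact: level_children_subset R1 R2 roots IH kn c.
  - exact: level_children_subset R2 R1 (sem_eq_sym roots) (sem_injective_from_sym IH) kn c.
by rewrite (nid_count C1 RO1 G1n) (nid_count C2 RO2 G2m) same_children (permP same_level).
Qed.

Lemma robdd_nodes_subset G1 G2 : is_robdd G1 -> is_robdd G2 ->
  compact G1 -> compact G2 -> respects_order G1 -> respects_order G2 ->
  sem_eq G1 G2 (broot G1) (broot G2) -> {subset bnodes G1 <= bnodes G2}.
Proof.
move=> R1 R2 C1 C2 RO1 RO2 roots n G1n; have [[O1 _ _] [O2 _ _]] := (R1, R2).
have inj := robdd_sem_injective R1 R2 C1 C2 RO1 RO2 roots.
have [m G2m [lnm nm]] := node_counterpart R1 R2 roots G1n.
have [uid_nm] := inj _ _ (ptr_valid_node G1n) (ptr_valid_node G2m)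
                     (ptr_ge0 _) (ptr_ge0 _) nm.
have inj1 := sem_injective_from_le (leq0n 1) inj.
have children_nm := sem_eq_children O1 O2 inj1 G1n G2m (leq0n _) lnm nm.
by rewrite (node_eq uid_nm children_nm).
Qed.

Lemma level_nodes_eq G1 G2 : uniq (map nuid (bnodes G1)) -> uniq (map nuid (bnodes G2)) ->
  bnodes G1 =i bnodes G2 -> level_nodes G1 =1 level_nodes G2.
Proof.
move=> U1 U2 same_nodes i; apply/perm_sort_inP.
- by move=> a b _ _; apply: leq_total.
- by move=> a b c _ _ _; apply: leq_trans.
- move=> a b; rewrite !mem_level => /andP[/eqP la G1a] /andP[/eqP lb G1b].
  rewrite -eqn_leq => /eqP iab; apply: (uniq_map_inj U1) => //.
  by rewrite !nuidE la lb iab.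
- apply: uniq_perm; rewrite ?filter_uniq ?(map_uniq U1) ?(map_uniq U2) // => n.
  by rewrite !mem_level same_nodes.
Qed.

Theorem proposition7 (Gf Gg : bdd) (f g : (nat -> bool) -> bool) :
  is_robdd Gf -> is_robdd Gg ->
  represents Gf f -> represents Gg g ->
  compact Gf -> compact Gg ->
  respects_order Gf -> respects_order Gg ->
  (forall x, f x = g x) <->
  (broot Gf = broot Gg /\ forall i j, jth_node Gf i j = jth_node Gg i j).
Proof.
move=> Rf Rg repf repg Cf Cg ROf ROg.
have [[Of _ _] [Og _ _]] := (Rf, Rg); have [[Uf _ _ _ _] [Ug _ _ _ _]] := (Of, Og).
split=> [fg | [same_root same_levels] x].
- have roots := represents_sem_eq Of Og repf repg fg.
  have same_nodes : bnodes Gf =i bnodes Gg.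
    move=> n; apply/idP/idP; first exact: (robdd_nodes_subset Rf Rg Cf Cg ROf ROg roots).
    exact: (robdd_nodes_subset Rg Rf Cg Cf ROg ROf (sem_eq_sym roots)).
  split=> [|i j]; last by rewrite /jth_node (level_nodes_eq Uf Ug same_nodes).
  apply: (robdd_sem_injective Rf Rg Cf Cg ROf ROg roots) roots;
    by rewrite ?obdd_root_valid ?ptr_ge0.
- have levels i : level_nodes Gf i = level_nodes Gg i.
    by apply: eq_from_onth => j; rewrite !onthE; apply: same_levels.
  have sub : {subset bnodes Gf <= bnodes Gg}.
    move=> n Gfn; have : n \in level_nodes Gf (nlabel n).
      by rewrite mem_level_nodes mem_level eqxx.
    by rewrite levels mem_level_nodes mem_level => /andP[].
  apply: (evals_functional Ug) (repg x); rewrite -same_root.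
  exact: evals_subgraph sub (repf x).
Qed.
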